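(* Any $D$-norm on $\mathbb{R}^{d+1}$ having a generator $\mathbf{Z}=(Z_0,\dots,Z_d)$ with $Z_i>0$ for all $0\le i\le d$ is also an $F$-norm on $\mathbb{R}^{d+1}$.
   Context: A $D$-norm on $\mathbb{R}^{d+1}$ is a norm of the form $\|\mathbf{x}\|_D=E(\max(|x_0|Z_0,\dots,|x_d|Z_d))$, where $\mathbf{Z}$ is componentwise nonnegative with $E(Z_i)=1$ for each $i$ (a generator). An $F$-norm on $\mathbb{R}^{d+1}$ is a norm of the form $E(\max(|x_0|,|x_1|X_1,\dots,|x_d|X_d))$ for a random vector $(X_1,\dots,X_d)$ whose components are a.s. nonnegative with $0<E(X_i)<\infty$. *)

From HB Require Import structures.
From mathcomp Require Import all_boot all_order all_algebra.
From mathcomp Require Import all_classical all_reals all_analysis.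
Set Implicit Arguments. Unset Strict Implicit. Unset Printing Implicit Defensive.
Import Order.TTheory GRing.Theory Num.Theory.
Local Open Scope ring_scope.

(* Vectors of R^(d+1) are functions 'I_d.+1 -> R, indexed 0..d.
   A random vector on (T, P) is a function Z : T -> 'I_n -> R whose
   components are measurable. *)

Definition is_generator (R : realType) (dT : measure_display)
    (T : measurableType dT) (P : probability T R) (n : nat)
    (Z : T -> 'I_n -> R) : Prop :=
  (forall i, measurable_fun [set: T] (fun w => Z w i)) /\
  (forall i, {ae P, forall w, 0 <= Z w i}) /\
  (forall i, ('E_P[fun w => Z w i] = 1)%E).

Definition Dnorm_expr (R : realType) (dT : measure_display)
    (T : measurableType dT) (P : probability T R) (d : nat)
    (Z : T -> 'I_d.+1 -> R) (x : 'I_d.+1 -> R) : \bar R :=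
  'E_P[fun w => \big[Num.max/0]_(i < d.+1) (`|x i| * Z w i)].

Definition is_Dnorm (R : realType) (d : nat) (N : ('I_d.+1 -> R) -> R) : Prop :=
  exists (dT : measure_display) (T : measurableType dT) (P : probability T R)
         (Z : T -> 'I_d.+1 -> R),
    is_generator P Z /\ forall x, (N x)%:E = Dnorm_expr P Z x.

(* E(max(|x_0|, |x_1| X_1, ..., |x_d| X_d)), with X = (X_1,...,X_d)
   indexed by 'I_d (X j corresponds to X_{j+1}) *)
Definition Fnorm_expr (R : realType) (dT : measure_display)
    (T : measurableType dT) (P : probability T R) (d : nat)
    (X : T -> 'I_d -> R) (x : 'I_d.+1 -> R) : \bar R :=
  'E_P[fun w => Num.max `|x ord0|
          (\big[Num.max/0]_(j < d) (`|x (lift ord0 j)| * X w j))].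

Definition is_Fnorm (R : realType) (d : nat) (N : ('I_d.+1 -> R) -> R) : Prop :=
  exists (dT : measure_display) (T : measurableType dT) (P : probability T R)
         (X : T -> 'I_d -> R),
    (forall j, measurable_fun [set: T] (fun w => X w j)) /\
    (forall j, {ae P, forall w, 0 <= X w j}) /\
    (forall j, (0 < 'E_P[fun w => X w j] < +oo)%E) /\
    forall x, (N x)%:E = Fnorm_expr P X x.

From HB Require Import structures.
From mathcomp Require Import all_boot all_order all_algebra.
From mathcomp Require Import all_classical all_reals all_analysis.
From mathcomp Require Import measurable_realfun.
Set Implicit Arguments.
Unset Strict Implicit.
Unset Printing Implicit Defensive.
Import Order.TTheory GRing.Theory Num.Theory.
Local Open Scope ring_scope.
Local Open Scope classical_set_scope.

(* Since E_P[Z_0] = 1, tilting P by the density Z_0 gives a probability Q with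
   E_Q[f] = E_P[f Z_0] for f >= 0.  As Z_0 > 0 a.s., X_j := Z_j / Z_0 is well
   defined and max_i |x_i| Z_i = Z_0 max(|x_0|, max_j |x_j| X_j) a.s., hence
   E_P[max_i |x_i| Z_i] = E_Q[max(|x_0|, max_j |x_j| X_j)], while
   E_Q[X_j] = E_P[Z_j] = 1. *)

Lemma measurable_inv (R : realType) : measurable_fun [set: R] GRing.inv.
Proof.
rewrite -(setvU [set 0]); apply/measurable_funU => //; first exact: measurableC.
split; last exact: measurable_fun_set1.
apply: open_continuous_measurable_fun.
  exact/closed_openC/accessible_closed_set1/hausdorff_accessible/Rhausdorff.
by move=> x; rewrite inE /= => /eqP x0; exact: inv_continuous.
Qed.

Lemma measurable_bigmaxr d (T : measurableType d) (R : realType) (D : set T)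
    (I : Type) (s : seq I) (h : I -> T -> R) :
  (forall i, measurable_fun D (h i)) ->
  measurable_fun D (fun x => \big[Num.max/0]_(i <- s) h i x).
Proof.
move=> mh; elim: s => [|i s ih].
  by under eq_fun do rewrite big_nil; exact: measurable_cst.
by under eq_fun do rewrite big_cons; exact: measurable_maxr.
Qed.

Section expectation_ae.
Context d (T : measurableType d) (R : realType) (P : probability T R).

Lemma ae_eq_expectation (X Y : T -> R) :
  measurable_fun setT X -> measurable_fun setT Y ->
  {ae P, forall w, X w = Y w} -> ('E_P[X] = 'E_P[Y])%E.
Proof.
move=> mX mY XY; rewrite !expectation.unlock.
apply: ae_eq_integral => //; [exact/measurable_EFinP..|].
by apply: filterS XY => w ->.
Qed.

End expectation_ae.

Section density_probability.
Context d (T : measurableType d) (R : realType).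
Variables (P : probability T R) (g : T -> R).
Hypotheses (mg : measurable_fun setT g) (g_ge0 : forall x, 0 <= g x)
  (Eg1 : ('E_P[g] = 1)%E).
Local Open Scope ereal_scope.

Let int_g1 : \int[P]_x (g x)%:E = 1.
Proof. by rewrite -Eg1 expectation.unlock. Qed.

Let integrable_g : P.-integrable setT (EFin \o g).
Proof.
apply/integrableP; split; first exact/measurable_EFinP.
apply/abse_integralP => //; first exact/measurable_EFinP.
by rewrite int_g1 abse1 ltry.
Qed.

Let induced_g_ge0 A : 0 <= induced_charge integrable_g A.
Proof. by apply: integral_ge0 => x _; rewrite lee_fin. Qed.

Let induced_g_setT : measure_of_charge _ induced_g_ge0 [set: T] = 1.
Proof. exact: int_g1. Qed.

HB.instance Definition _ := Measure_isProbability.Build _ _ _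
  (measure_of_charge _ induced_g_ge0) induced_g_setT.

Definition density_prob : probability T R := measure_of_charge _ induced_g_ge0.

Lemma density_prob_dominates : density_prob `<< P.
Proof.
apply/null_content_dominatesP => A mA PA0.
by apply: null_set_integral => //; exact/measurable_funTS/measurable_EFinP.
Qed.

Lemma ge0_integral_density_prob (f : T -> \bar R) E : (forall x, 0 <= f x) ->
    measurable E -> measurable_fun E f ->
  \int[density_prob]_(x in E) f x = \int[P]_(x in E) (f x * (g x)%:E).
Proof.
move=> f0 mE mf; have Q_P := density_prob_dominates.
have int_dQdP := Radon_Nikodym_SigmaFinite.f_integrable Q_P.
rewrite -(Radon_Nikodym_SigmaFinite.change_of_variables Q_P) //.
apply: ae_eq_integral => //.
- apply: emeasurable_funM => //.
  exact/measurable_funTS/(measurable_int _ int_dQdP).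
- by apply: emeasurable_funM => //; exact/measurable_funTS/measurable_EFinP.
(* uniqueness of densities: dQ/dP = g a.e. *)
apply: ae_eqe_mul2l; apply: integral_ae_eq => //.
- exact: integrableS int_dQdP.
- exact/measurable_funTS/measurable_EFinP.
by move=> A _ mA; rewrite -Radon_Nikodym_SigmaFinite.f_integral.
Qed.

Lemma ge0_expectation_density_prob (X : T -> R) :
  measurable_fun setT X -> (forall w, (0 <= X w)%R) ->
  ('E_density_prob[X] = 'E_P[X \* g])%E.
Proof.
move=> mX X0; rewrite !expectation.unlock ge0_integral_density_prob //.
exact/measurable_EFinP.
Qed.

End density_probability.

Section max_integrands.
Context (R : realType) (n : nat).
Implicit Types (x z : 'I_n.+1 -> R) (y : 'I_n -> R).

Definition Dmax x z : R := \big[Num.max/0]_(i < n.+1) (`|x i| * z i).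

Definition Fmax x y : R :=
  Num.max `|x ord0| (\big[Num.max/0]_(j < n) (`|x (lift ord0 j)| * y j)).

Lemma Fmax_ge0 x y : 0 <= Fmax x y.
Proof. by rewrite le_max normr_ge0. Qed.

Lemma Dmax_Fmax x z : 0 < z ord0 ->
  Dmax x z = Fmax x (fun j => z (lift ord0 j) / z ord0) * z ord0.
Proof.
move=> z0; rewrite /Dmax /Fmax big_ord_recl maxr_pMl ?ltW //; congr Num.max.
rewrite (big_endo (fun a => a * z ord0)) ?mul0r //; last first.
  by move=> a b; rewrite maxr_pMl ?ltW.
by apply: eq_bigr => j _; rewrite -mulrA mulfVK ?gt_eqF.
Qed.

Context d (T : measurableType d).

Lemma measurable_Dmax x (Z : T -> 'I_n.+1 -> R) :
  (forall i, measurable_fun setT (Z ^~ i)) ->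
  measurable_fun setT (fun w => Dmax x (Z w)).
Proof.
by move=> mZ; apply: measurable_bigmaxr => i; exact: measurable_funM.
Qed.

Lemma measurable_Fmax x (Y : T -> 'I_n -> R) :
  (forall j, measurable_fun setT (Y ^~ j)) ->
  measurable_fun setT (fun w => Fmax x (Y w)).
Proof.
move=> mY; apply: measurable_maxr => //.
by apply: measurable_bigmaxr => j; exact: measurable_funM.
Qed.

End max_integrands.

Section generator_change_of_measure.
Context (R : realType) (n : nat) d (T : measurableType d) (P : probability T R).
Variable Z : T -> 'I_n.+1 -> R.
Hypotheses (Zgen : is_generator P Z) (Z0_gt0 : {ae P, forall w, 0 < Z w ord0}).

Let mZ : forall i, measurable_fun setT (Z ^~ i). Proof. by case: Zgen. Qed.

Let Z_good : {ae P, forall w, 0 < Z w ord0 /\ forall i, 0 <= Z w i}.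
Proof.
case: Zgen => _ [Z_ge0 _].
by apply: filterS2 Z0_gt0 (filter_forall _ Z_ge0) => w; split.
Qed.

(* The absolute values make the density and the ratios nonnegative everywhere
   without changing them on the a.s. event where Z >= 0 and Z_0 > 0. *)
Let g w : R := `|Z w ord0|.

Let mg : measurable_fun setT g. Proof. exact: measurableT_comp. Qed.

Let g_ge0 w : 0 <= g w. Proof. exact: normr_ge0. Qed.

Let Eg1 : ('E_P[g] = 1)%E.
Proof.
case: Zgen => _ [_ EZ1]; rewrite -(EZ1 ord0); apply: ae_eq_expectation => //.
by apply: filterS Z_good => w [w0 _]; rewrite /g gtr0_norm.
Qed.

Definition generator_tilt : probability T R := density_prob mg g_ge0 Eg1.

Definition generator_ratio w (j : 'I_n) : R := `|Z w (lift ord0 j) / Z w ord0|.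

Lemma measurable_generator_ratio j : measurable_fun setT (generator_ratio ^~ j).
Proof.
rewrite /generator_ratio; apply: measurableT_comp => //.
apply: measurable_funM => //.
by apply: (measurableT_comp (@measurable_inv R)); exact: mZ.
Qed.

Lemma expectation_generator_ratio j :
  ('E_generator_tilt[generator_ratio ^~ j] = 1)%E.
Proof.
case: Zgen => _ [_ EZ1].
rewrite ge0_expectation_density_prob //; last 2 first.
- exact: measurable_generator_ratio.
- by move=> w; exact: normr_ge0.
rewrite -(EZ1 (lift ord0 j)); apply: ae_eq_expectation => //.
  exact/measurable_funM/mg/measurable_generator_ratio.
apply: filterS Z_good => w [w0 wge0] /=.
by rewrite /generator_ratio /g -normrM mulfVK ?gt_eqF // ger0_norm.
Qed.

Lemma Fnorm_expr_generator_ratio x :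
  Fnorm_expr generator_tilt generator_ratio x = Dnorm_expr P Z x.
Proof.
have mratio := measurable_generator_ratio.
rewrite [LHS]ge0_expectation_density_prob; last 2 first.
- exact: measurable_Fmax.
- by move=> w; exact: Fmax_ge0.
apply: ae_eq_expectation.
- exact/measurable_funM/mg/measurable_Fmax.
- exact: measurable_Dmax.
apply: filterS Z_good => w [w0 wge0] /=.
change (Fmax x (generator_ratio w) * g w = Dmax x (Z w)).
rewrite (Dmax_Fmax _ w0) /g gtr0_norm //; congr (Fmax _ _ * _).
by apply/funext => j; rewrite /generator_ratio ger0_norm // divr_ge0 // ltW.
Qed.

End generator_change_of_measure.

Theorem corollary2p20 (R : realType) (d : nat) (N : ('I_d.+1 -> R) -> R) :
  (exists (dT : measure_display) (T : measurableType dT) (P : probability T R)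
          (Z : T -> 'I_d.+1 -> R),
     is_generator P Z /\
     (forall i, {ae P, forall w, 0 < Z w i}) /\
     forall x, (N x)%:E = Dnorm_expr P Z x) ->
  is_Fnorm N.
Proof.
move=> [dT [T [P [Z [Zgen [Z_gt0 NE]]]]]].
exists dT, T, (generator_tilt Zgen (Z_gt0 ord0)), (generator_ratio Z).
split; first exact: measurable_generator_ratio Zgen.
split; first by move=> j; apply: aeW => w; exact: normr_ge0.
split; first by move=> j; rewrite expectation_generator_ratio lte01 ltey.
by move=> x; rewrite NE Fnorm_expr_generator_ratio.
Qed.
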